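(* Let $F(x,y)=\sum_{i=0}^2\sum_{j=0}^2 c_{i,j}x^iy^j=Y_0(y)+xY_1(y)+x^2Y_2(y)$ be a biquadratic polynomial. Define $$\mathcal R(\Sigma,\Pi)=\operatorname{Res}_y\big(\Sigma\,Y_2(y)+Y_1(y),\ \Pi\,Y_2(y)-Y_0(y)\big),$$ the resultant (Sylvester $4\times4$ determinant) with respect to $y$ of these two polynomials of degree $\le 2$ in $y$. Then $\mathcal R$ is a polynomial of total degree at most $2$ in $(\Sigma,\Pi)$; i.e. the coefficients of $\Sigma^2\Pi^2$, $\Sigma^2\Pi$ and $\Sigma\Pi^2$ vanish. Consequently $E(x,z):=\mathcal R(x+z,xz)$ is a symmetric biquadratic polynomial, $E(x,z)=\sum_{i,j=0}^2 e_{i,j}x^iz^j$ with $e_{i,j}=e_{j,i}$, and for every elliptic sequence $(x_n,y_n)_{n\in\mathbb Z}$ on $F$ with $Y_2(y_n)\neq0$ for all $n$, one has $E(x_n,x_{n+1})=0$ for all $n\in\mathbb Z$.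
   Context: Write $Y_i(y)=\sum_{j=0}^2 c_{i,j}y^j$ and $X_j(x)=\sum_{i=0}^2 c_{i,j}x^i$, so that $F(x,y)=Y_0(y)+xY_1(y)+x^2Y_2(y)=X_0(x)+yX_1(x)+y^2X_2(x)$. An elliptic sequence on $F$ is a doubly infinite sequence of points $(x_n,y_n)_{n\in\mathbb Z}$ such that for every $n$, $x_n$ and $x_{n+1}$ are the two roots (with multiplicity) of the quadratic polynomial $x\mapsto F(x,y_n)$, and $y_{n-1}$ and $y_n$ are the two roots of $y\mapsto F(x_n,y)$. In particular $F(x_n,y_n)=F(x_{n+1},y_n)=0$, $x_n+x_{n+1}=-Y_1(y_n)/Y_2(y_n)$ and $x_nx_{n+1}=Y_0(y_n)/Y_2(y_n)$ whenever $Y_2(y_n)\ne0$. *)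

From HB Require Import structures.
From mathcomp Require Import all_boot all_order all_algebra.
Set Implicit Arguments. Unset Strict Implicit. Unset Printing Implicit Defensive.
Import Order.TTheory GRing.Theory Num.Theory.
Local Open Scope ring_scope.

(* Coefficients of the biquadratic F(x,y) = sum_{i,j<=2} c i j x^i y^j are
   given by c : nat -> nat -> R; only the values with i, j <= 2 are used. *)

Section Biquad.
Variable R : fieldType.
Variable c : nat -> nat -> R.

Definition Ycoef (i : nat) (y : R) : R := \sum_(j < 3) c i j * y ^+ j.
Definition Xcoef (j : nat) (x : R) : R := \sum_(i < 3) c i j * x ^+ i.

Definition Fx (y : R) : {poly R} := \sum_(i < 3) Ycoef i y *: 'X^i.
Definition Fy (x : R) : {poly R} := \sum_(j < 3) Xcoef j x *: 'X^j.
End Biquad.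

Definition roots2 (R : fieldType) (q : {poly R}) (a b : R) : Prop :=
  q = q`_2 *: (('X - a%:P) * ('X - b%:P)).

Definition elliptic_seq (R : fieldType) (c : nat -> nat -> R)
  (xs ys : int -> R) : Prop :=
  forall n : int,
    roots2 (Fx c (ys n)) (xs n) (xs (n + 1)) /\
    roots2 (Fy c (xs n)) (ys (n - 1)) (ys n).

(* Sylvester 4x4 matrix of a2 y^2 + a1 y + a0 and b2 y^2 + b1 y + b0
   (formal degree 2 each). *)
Definition sylv4 (S : comRingType) (a b : nat -> S) : 'M[S]_4 :=
  \matrix_(i < 4, j < 4)
    if (i < 2)%N then (if (i <= j <= i + 2)%N then a (2 + i - j)%N else 0)
    else (if (i - 2 <= j <= i)%N then b (i - j)%N else 0).

Definition res2 (S : comRingType) (a b : nat -> S) : S := \det (sylv4 a b).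

(* Bivariate polynomials in {poly {poly R}}: the outer variable is 'X,
   the inner variable is 'X%:P; P`_a`_b is the coefficient of
   (outer)^a (inner)^b. *)
Definition C2 (R : fieldType) (r : R) : {poly {poly R}} := r%:P%:P.

(* R(Sigma, Pi) = Res_y(Sigma Y2(y) + Y1(y), Pi Y2(y) - Y0(y)),
   with Sigma = outer variable, Pi = inner variable. *)
Definition Rpoly (R : fieldType) (c : nat -> nat -> R) : {poly {poly R}} :=
  res2 (fun j => 'X * C2 (c 2%N j) + C2 (c 1%N j))
       (fun j => ('X)%:P * C2 (c 2%N j) - C2 (c 0%N j)).

Definition eval2 (R : fieldType) (P : {poly {poly R}}) (s p : {poly {poly R}})
  : {poly {poly R}} :=
  \sum_(i < size P) \sum_(j < size P`_i) C2 (P`_i`_j) * s ^+ i * p ^+ j.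

(* E(x,z) = R(x+z, xz), with x = outer variable, z = inner variable. *)
Definition Epoly (R : fieldType) (c : nat -> nat -> R) : {poly {poly R}} :=
  eval2 (Rpoly c) ('X + ('X)%:P) ('X * ('X)%:P).

From HB Require Import structures.
From mathcomp Require Import all_boot all_order all_algebra.
From mathcomp Require Import ring.
Import Order.TTheory GRing.Theory Num.Theory.
Local Open Scope ring_scope.

(* The Sylvester resultant of two quadratics a, b has the closed form
   (a2 b0 - a0 b2)^2 - (a2 b1 - a1 b2)(a1 b0 - a0 b1), a quadratic form in the
   minors a_i b_j - a_j b_i.  For a = Sigma Y2 + Y1 and b = Pi Y2 - Y0 each minor
   has total degree 1 in (Sigma, Pi), because the Sigma Pi c_{2,i} c_{2,j} terms
   cancel by antisymmetry; hence R has total degree 2.  Along an elliptic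
   sequence, Vieta's formulas for x |-> F(x, y_n) show that y_n is a common root
   of Sigma Y2 + Y1 and Pi Y2 - Y0 for Sigma = x_n + x_{n+1}, Pi = x_n x_{n+1},
   so the resultant E(x_n, x_{n+1}) vanishes. *)

Definition resq {S : comNzRingType} (a b : nat -> S) : S :=
  (a 2%N * b 0%N - a 0%N * b 2%N) ^+ 2
  - (a 2%N * b 1%N - a 1%N * b 2%N) * (a 1%N * b 0%N - a 0%N * b 1%N).

Lemma res2E (S : comNzRingType) (a b : nat -> S) : res2 a b = resq a b.
Proof.
rewrite /res2 /resq.
repeat rewrite ?det_mx00 (expand_det_row _ ord0) !big_ord_recr big_ord0 /= /cofactor.
by rewrite det_mx00 !mxE /= /bump /=; ring.
Qed.

Lemma resq_common_root {S : fieldType} {a b : nat -> S} {y : S} :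
  \sum_(j < 3) a j * y ^+ j = 0 -> \sum_(j < 3) b j * y ^+ j = 0 ->
  resq a b = 0.
Proof.
rewrite !big_ord_recr !big_ord0 /= !add0r expr0 expr1 !mulr1.
move=> ra rb.
(* With A = a(y) and B = b(y), both b2 A - a2 B and a0 B - b0 A are multiples
   of y; the combination below eliminates y, leaving y = 0 as the only case
   left to treat separately. *)
have elim_y : resq a b * y =
  (a 2%N * b 0%N - a 0%N * b 2%N) * y *
     (a 2%N * (b 0%N + b 1%N * y + b 2%N * y ^+ 2)
      - b 2%N * (a 0%N + a 1%N * y + a 2%N * y ^+ 2))
  - (a 2%N * b 1%N - a 1%N * b 2%N) *
     (b 0%N * (a 0%N + a 1%N * y + a 2%N * y ^+ 2)
      - a 0%N * (b 0%N + b 1%N * y + b 2%N * y ^+ 2)).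
  by rewrite /resq; ring.
move: elim_y; rewrite ra rb !(mulr0, subr0) => /eqP.
rewrite mulf_eq0 => /orP[/eqP // | /eqP y0].
move: ra rb; rewrite y0 expr0n /= !mulr0 !addr0 => a0 b0.
by rewrite /resq a0 b0; ring.
Qed.

(* Coefficient of Sigma^a Pi^b in Res_y(Sigma Y2 + Y1, Pi Y2 - Y0). *)
Definition rcoef {S : comNzRingType} (c : nat -> nat -> S) (a b : nat) : S :=
  let al i j := c 2%N j * c 0%N i - c 2%N i * c 0%N j in
  let be i j := c 1%N i * c 2%N j - c 1%N j * c 2%N i in
  let ga i j := c 1%N j * c 0%N i - c 1%N i * c 0%N j in
  match a, b with
  | 0%N, 0%N => ga 2 0 ^+ 2 - ga 2 1 * ga 1 0
  | 1%N, 0%N => (al 2 0 * ga 2 0) *+ 2 - al 2 1 * ga 1 0 - ga 2 1 * al 1 0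
  | 0%N, 1%N => (be 2 0 * ga 2 0) *+ 2 - be 2 1 * ga 1 0 - ga 2 1 * be 1 0
  | 2%N, 0%N => al 2 0 ^+ 2 - al 2 1 * al 1 0
  | 1%N, 1%N => (al 2 0 * be 2 0) *+ 2 - al 2 1 * be 1 0 - be 2 1 * al 1 0
  | 0%N, 2%N => be 2 0 ^+ 2 - be 2 1 * be 1 0
  | _, _ => 0
  end.

Lemma resq_expand (S : comNzRingType) (c : nat -> nat -> S) (s p : S) :
  resq (fun j => s * c 2%N j + c 1%N j) (fun j => p * c 2%N j - c 0%N j)
  = \sum_(i < 3) \sum_(j < 3) rcoef c i j * s ^+ i * p ^+ j.
Proof. by rewrite !big_ord_recr !big_ord0 /= /resq /rcoef /=; ring. Qed.

Lemma rcoef_rmorph {S T : comNzRingType} (f : {rmorphism S -> T})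
    (c : nat -> nat -> S) (a b : nat) :
  rcoef (fun i j => f (c i j)) a b = f (rcoef c a b).
Proof.
by case: a => [|[|[|a]]]; case: b => [|[|[|b]]];
  rewrite /rcoef ?(rmorph0, rmorphB, rmorphMn, rmorphM, rmorphXn).
Qed.

Arguments rcoef : simpl never.

Definition bipoly3 {R : fieldType} (f : nat -> nat -> R) : {poly {poly R}} :=
  \sum_(i < 3) \sum_(j < 3) C2 (f i j) * 'X ^+ i * ('X%:P) ^+ j.

Lemma coef_C2_monomial (R : fieldType) (r : R) (i j a b : nat) :
  (C2 r * 'X ^+ i * ('X%:P) ^+ j)`_a`_b
  = if (a == i) && (b == j) then r else 0.
Proof.
rewrite /C2 -rmorphXn /= mulrAC -rmorphM /= mul_polyC coefZ coefXn.
case: (a == i) => /=; last by rewrite mulr0 coef0.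
by rewrite mulr1 coefCM coefXn; case: (b == j); rewrite ?mulr1 ?mulr0.
Qed.

Lemma coef_bipoly3 (R : fieldType) (f : nat -> nat -> R) (a b : nat) :
  (bipoly3 f)`_a`_b = if (a < 3)%N && (b < 3)%N then f a b else 0.
Proof.
rewrite /bipoly3 !big_ord_recr !big_ord0 /= !add0r !coefD !coef_C2_monomial.
by case: a => [|[|[|a]]]; case: b => [|[|[|b]]] /=; rewrite ?add0r ?addr0.
Qed.

Lemma sum_ord_supported (V : zmodType) (n m : nat) (F : nat -> V) :
  (forall k, (n <= k)%N -> F k = 0) -> (forall k, (m <= k)%N -> F k = 0) ->
  \sum_(i < n) F i = \sum_(i < m) F i.
Proof.
wlog nm : n m / (n <= m)%N => [W Fn Fm|Fn _].
  by case: (leqP n m) => [|/ltnW] nm; [exact: W | symmetry; exact: W].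
rewrite (big_ord_widen m F nm) big_mkcond; apply: eq_bigr => i _.
by case: ifPn => // /negbTE; rewrite ltnNge => /negbFE /Fn.
Qed.

Lemma eval2_bipoly3 (R : fieldType) (f : nat -> nat -> R)
    (s p : {poly {poly R}}) :
  eval2 (bipoly3 f) s p = \sum_(i < 3) \sum_(j < 3) C2 (f i j) * s ^+ i * p ^+ j.
Proof.
set P := bipoly3 f.
have C20 : C2 (0 : R) = 0 by rewrite /C2 !polyC0.
have coef_out i j : (3 <= i)%N || (3 <= j)%N -> P`_i`_j = 0.
  by move=> out; rewrite coef_bipoly3 ifF //; apply/negbTE; rewrite negb_and -!leqNgt.
rewrite /eval2 (@sum_ord_supported _ (size P) 3
  (fun i => \sum_(j < size P`_i) C2 (P`_i`_j) * s ^+ i * p ^+ j)) => [|k hk|k hk].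
- apply: eq_bigr => i _.
  rewrite (@sum_ord_supported _ (size P`_i) 3
    (fun j => C2 (P`_i`_j) * s ^+ i * p ^+ j)) => [|j hj|j hj].
  + by apply: eq_bigr => j _; rewrite coef_bipoly3 !ltn_ord.
  + by rewrite nth_default // C20 !mul0r.
  + by rewrite coef_out ?hj ?orbT // C20 !mul0r.
- by rewrite nth_default // size_poly0 big_ord0.
- by apply: big1 => j _; rewrite coef_out ?hk // C20 !mul0r.
Qed.

Lemma RpolyE (R : fieldType) (c : nat -> nat -> R) : Rpoly c = bipoly3 (rcoef c).
Proof.
rewrite /Rpoly res2E (resq_expand _ (fun i j => C2 (c i j))).
apply: eq_bigr => i _; apply: eq_bigr => j _.
by rewrite /C2 (rcoef_rmorph polyC (fun i j => (c i j)%:P)) (rcoef_rmorph polyC).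
Qed.

(* Coefficient of x^a z^b in R(x + z, x z), using that rcoef vanishes in
   total degree > 2. *)
Definition ecoef {R : fieldType} (c : nat -> nat -> R) (a b : nat) : R :=
  match a, b with
  | 0%N, 0%N => rcoef c 0 0
  | 1%N, 0%N | 0%N, 1%N => rcoef c 1 0
  | 2%N, 0%N | 0%N, 2%N => rcoef c 2 0
  | 1%N, 1%N => rcoef c 0 1 + rcoef c 2 0 *+ 2
  | 2%N, 1%N | 1%N, 2%N => rcoef c 1 1
  | 2%N, 2%N => rcoef c 0 2
  | _, _ => 0
  end.

Lemma EpolyE (R : fieldType) (c : nat -> nat -> R) : Epoly c = bipoly3 (ecoef c).
Proof.
rewrite /Epoly RpolyE eval2_bipoly3 /bipoly3 !big_ord_recr !big_ord0 /=.
have -> : rcoef c 2 1 = 0 by [].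
have -> : rcoef c 1 2 = 0 by [].
have -> : rcoef c 2 2 = 0 by [].
by rewrite /ecoef /C2 !polyC0 !rmorphD ?rmorphMn; ring.
Qed.

Lemma Epoly_horner (R : fieldType) (c : nat -> nat -> R) (x z : R) :
  ((Epoly c).[x%:P]).[z]
  = resq (fun j => (x + z) * c 2%N j + c 1%N j) (fun j => x * z * c 2%N j - c 0%N j).
Proof.
rewrite resq_expand /Epoly RpolyE eval2_bipoly3.
rewrite !big_ord_recr !big_ord0 /C2 !hornerE /=; ring.
Qed.

Lemma roots2_coef (R : fieldType) (q : {poly R}) (a b : R) :
  roots2 q a b -> q`_1 = - (q`_2 * (a + b)) /\ q`_0 = q`_2 * (a * b).
Proof.
rewrite /roots2.
have -> : ('X - a%:P) * ('X - b%:P) = 'X ^+ 2 - (a + b)%:P * 'X + (a * b)%:P.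
  by rewrite rmorphD rmorphM /=; ring.
move=> qE.
have q1 := congr1 (fun r : {poly R} => r`_1) qE.
have q0 := congr1 (fun r : {poly R} => r`_0) qE.
move: q1 q0; rewrite /= !coefZ !coefD !coefN !coefXn !coefCM !coefX ?coefC /=.
by move=> -> ->; split; ring.
Qed.

Lemma coef_Fx (R : fieldType) (c : nat -> nat -> R) (y : R) (k : nat) :
  (k < 3)%N -> (Fx c y)`_k = Ycoef c k y.
Proof.
rewrite /Fx coef_sum !big_ord_recr big_ord0 /= !coefZ !coefXn add0r.
by case: k => [|[|[|k]]] //= _; rewrite ?mulr0 ?mulr1 ?addr0 ?add0r.
Qed.

Lemma elliptic_seq_common_root {R : fieldType} {c : nat -> nat -> R}
    {xs ys : int -> R} (n : int) :
  elliptic_seq c xs ys ->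
  \sum_(j < 3) ((xs n + xs (n + 1)) * c 2%N j + c 1%N j) * ys n ^+ j = 0 /\
  \sum_(j < 3) (xs n * xs (n + 1) * c 2%N j - c 0%N j) * ys n ^+ j = 0.
Proof.
move=> /(_ n) [/roots2_coef []]; rewrite !coef_Fx // => Y1E Y0E _.
split.
- transitivity ((xs n + xs (n + 1)) * Ycoef c 2 (ys n) + Ycoef c 1 (ys n)).
    by rewrite /Ycoef !big_ord_recr !big_ord0 /=; ring.
  by rewrite Y1E; ring.
- transitivity (xs n * xs (n + 1) * Ycoef c 2 (ys n) - Ycoef c 0 (ys n)).
    by rewrite /Ycoef !big_ord_recr !big_ord0 /=; ring.
  by rewrite Y0E; ring.
Qed.

Theorem mainTheorem1 (R : fieldType) (c : nat -> nat -> R) :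
  (forall a b : nat, (2 < a + b)%N -> (Rpoly c)`_a`_b = 0)
  /\ (forall i j : nat, (Epoly c)`_i`_j = (Epoly c)`_j`_i)
  /\ (forall i j : nat, (2 < i)%N \/ (2 < j)%N -> (Epoly c)`_i`_j = 0)
  /\ (forall xs ys : int -> R,
        elliptic_seq c xs ys ->
        (forall n : int, Ycoef c 2 (ys n) != 0) ->
        forall n : int, ((Epoly c).[(xs n)%:P]).[xs (n + 1)] = 0).
Proof.
split=> [a b|]; first rewrite RpolyE coef_bipoly3.
  by case: a => [|[|[|a]]]; case: b => [|[|[|b]]].
split=> [i j|]; first rewrite EpolyE !coef_bipoly3.
  by case: i => [|[|[|i]]]; case: j => [|[|[|j]]].
split=> [i j|xs ys ell _ n].
  by rewrite EpolyE coef_bipoly3 (ltnNge i) (ltnNge j) => -[] ->; rewrite ?andbF.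
have [sigma_root pi_root] := elliptic_seq_common_root n ell.
by rewrite Epoly_horner (resq_common_root sigma_root pi_root).
Qed.
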